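(* Let $D$ be a doomed term. Then every transition $D \xrightarrow{a} P$ has $a = \tau$; there is no infinite sequence of internal transitions $D = P_0 \xrightarrow{a_1} P_1 \xrightarrow{a_2} P_2 \cdots$; and every finite sequence of internal transitions starting from $D$ that cannot be extended by a further transition ends in the term $\mathit{FAIL}$. (That is, a doomed term always transitions to $\mathit{FAIL}$ while emitting nothing but $\tau$.)
   Context: Fix a set $\Sigma$ of events and a set of event variables $x$. Terms are given by the grammar $P, Q ::= \mathit{STOP} \mid \mathit{FAIL} \mid ?x{:}E \rightarrow P \mid P \,\Box\, Q \mid P \parallel_E Q$, where an event set $E$ has the form $f(y_1,\dots,y_n)$ with $f : \Sigma^n \to 2^\Sigma$ computable and each $y_i$ an event variable or an event; in $?x{:}E \rightarrow P$ the variable $x$ is bound in $P$. Terms are closed (no free event variables), so each event set $E$ denotes the subset $f(e_1,\dots,e_n)$ of $\Sigma$; $[e/x]P$ denotes substitution of the event $e$ for free occurrences of $x$. Actions are $a ::= e \mid \tau$ with $\tau \notin \Sigma$. Doomed terms are given by the grammar $D ::= \mathit{FAIL} \mid D \,\Box\, D \mid D \parallel_E P \mid P \parallel_E D$ ($P$ an arbitrary term); a viable term is a term that is not doomed, and $\hat P, \hat Q$ range over viable terms. The internal transition relation $P \xrightarrow{a} Q$ is the least relation closed under the rules: (1) if $e \in E$ then $(?x{:}E \rightarrow P) \xrightarrow{e} [e/x]P$; (2) if $P \xrightarrow{\tau} P'$ then $P \Box Q \xrightarrow{\tau} P' \Box Q$; (3) if $Q \xrightarrow{\tau} Q'$ then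 $P \Box Q \xrightarrow{\tau} P \Box Q'$; (4) if $P \xrightarrow{e} P'$ then $P \Box Q \xrightarrow{e} P'$; (5) if $Q \xrightarrow{e} Q'$ then $P \Box Q \xrightarrow{e} Q'$; (6) if $P \xrightarrow{a} P'$, $a \notin E$ and $\hat Q$ is viable, then $P \parallel_E \hat Q \xrightarrow{a} P' \parallel_E \hat Q$; (7) if $Q \xrightarrow{a} Q'$, $a \notin E$ and $\hat P$ is viable, then $\hat P \parallel_E Q \xrightarrow{a} \hat P \parallel_E Q'$; (8) if $\hat P, \hat Q$ are viable, $\hat P \xrightarrow{e} P'$, $\hat Q \xrightarrow{e} Q'$ and $e \in E$, then $\hat P \parallel_E \hat Q \xrightarrow{e} P' \parallel_E Q'$; (9) if $D_1, D_2$ are doomed and $D_1 \xrightarrow{\tau} P_1$, then $D_1 \parallel_E D_2 \xrightarrow{\tau} P_1 \parallel_E D_2$; (10) if $D_1, D_2$ are doomed and $D_2 \xrightarrow{\tau} P_2$, then $D_1 \parallel_E D_2 \xrightarrow{\tau} D_1 \parallel_E P_2$; (11) $\mathit{FAIL} \Box \mathit{FAIL} \xrightarrow{\tau} \mathit{FAIL}$; (12) $\mathit{FAIL} \parallel_E P \xrightarrow{\tau} \mathit{FAIL}$ for every term $P$; (13) $P \parallel_E \mathit{FAIL} \xrightarrow{\tau} \mathit{FAIL}$ for every term $P$. (Note $\tau \notin E$ always.) *)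

From Stdlib Require Import List Arith.
Import ListNotations.
Set Implicit Arguments.

Section Calculus.
Variable Sigma : Type.

Definition evar := nat.

Inductive atom : Type :=
| AVar : evar -> atom
| AEv : Sigma -> atom.

(* An event set f(y_1,...,y_n): a computable (boolean-valued) function
   f : Sigma^n -> 2^Sigma (given as a function of the list of arguments)
   together with the list of arguments y_1..y_n. *)
Record evset : Type := EvSet {
  es_fun : list Sigma -> Sigma -> bool;
  es_args : list atom
}.

Inductive term : Type :=
| STOP : term
| FAIL : term
| Prefix : evar -> evset -> term -> term      (* ?x:E -> P, x bound in P *)
| Choice : term -> term -> term
| Par : term -> evset -> term -> term.

Inductive action : Type :=
| Ev : Sigma -> action
| Tau : action.

Definition subst_atom (x : evar) (e : Sigma) (y : atom) : atom :=
  match y with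
  | AVar z => if Nat.eqb z x then AEv e else AVar z
  | AEv s => AEv s
  end.

Definition subst_evset (x : evar) (e : Sigma) (E : evset) : evset :=
  EvSet (es_fun E) (map (subst_atom x e) (es_args E)).

Fixpoint subst (x : evar) (e : Sigma) (P : term) : term :=
  match P with
  | STOP => STOP
  | FAIL => FAIL
  | Prefix y E Q =>
      Prefix y (subst_evset x e E) (if Nat.eqb y x then Q else subst x e Q)
  | Choice P1 P2 => Choice (subst x e P1) (subst x e P2)
  | Par P1 E P2 => Par (subst x e P1) (subst_evset x e E) (subst x e P2)
  end.

Definition atom_closed_in (bound : list evar) (y : atom) : Prop :=
  match y with
  | AVar z => In z bound
  | AEv _ => True
  end.

Definition evset_closed_in (bound : list evar) (E : evset) : Prop :=
  Forall (atom_closed_in bound) (es_args E).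

Fixpoint closed_in (bound : list evar) (P : term) : Prop :=
  match P with
  | STOP => True
  | FAIL => True
  | Prefix x E Q => evset_closed_in bound E /\ closed_in (x :: bound) Q
  | Choice P1 P2 => closed_in bound P1 /\ closed_in bound P2
  | Par P1 E P2 => closed_in bound P1 /\ evset_closed_in bound E /\ closed_in bound P2
  end.

Definition closed (P : term) : Prop := closed_in [] P.

(* Denotation of an event set of a closed term: the event e belongs to
   f(e_1,...,e_n) where all arguments are events. (Arguments that are
   variables never occur in closed terms; they make the set empty here.) *)
Fixpoint atoms_events (l : list atom) : option (list Sigma) :=
  match l with
  | [] => Some []
  | AEv s :: l' => option_map (cons s) (atoms_events l')
  | AVar _ :: _ => None
  end.

Definition in_evset (e : Sigma) (E : evset) : Prop :=
  exists es, atoms_events (es_args E) = Some es /\ es_fun E es e = true.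

Definition act_in (a : action) (E : evset) : Prop :=
  match a with
  | Ev e => in_evset e E
  | Tau => False
  end.

Inductive doomed : term -> Prop :=
| doomed_FAIL : doomed FAIL
| doomed_Choice : forall D1 D2, doomed D1 -> doomed D2 -> doomed (Choice D1 D2)
| doomed_ParL : forall D E P, doomed D -> doomed (Par D E P)
| doomed_ParR : forall P E D, doomed D -> doomed (Par P E D).

Definition viable (P : term) : Prop := ~ doomed P.

(* Internal transition relation P --a--> Q, rules (1)-(13). *)
Inductive step : term -> action -> term -> Prop :=
| st_prefix : forall x E P e, in_evset e E ->
    step (Prefix x E P) (Ev e) (subst x e P)
| st_choice_tauL : forall P Q P', step P Tau P' ->
    step (Choice P Q) Tau (Choice P' Q)
| st_choice_tauR : forall P Q Q', step Q Tau Q' ->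
    step (Choice P Q) Tau (Choice P Q')
| st_choice_evL : forall P Q P' e, step P (Ev e) P' ->
    step (Choice P Q) (Ev e) P'
| st_choice_evR : forall P Q Q' e, step Q (Ev e) Q' ->
    step (Choice P Q) (Ev e) Q'
| st_par_L : forall P E Q P' a, step P a P' -> ~ act_in a E -> viable Q ->
    step (Par P E Q) a (Par P' E Q)
| st_par_R : forall P E Q Q' a, step Q a Q' -> ~ act_in a E -> viable P ->
    step (Par P E Q) a (Par P E Q')
| st_par_sync : forall P E Q P' Q' e, viable P -> viable Q ->
    step P (Ev e) P' -> step Q (Ev e) Q' -> in_evset e E ->
    step (Par P E Q) (Ev e) (Par P' E Q')
| st_par_doomL : forall D1 D2 E P1, doomed D1 -> doomed D2 ->
    step D1 Tau P1 -> step (Par D1 E D2) Tau (Par P1 E D2)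
| st_par_doomR : forall D1 D2 E P2, doomed D1 -> doomed D2 ->
    step D2 Tau P2 -> step (Par D1 E D2) Tau (Par D1 E P2)
| st_fail_choice : step (Choice FAIL FAIL) Tau FAIL
| st_fail_parL : forall E P, step (Par FAIL E P) Tau FAIL
| st_fail_parR : forall E P, step (Par P E FAIL) Tau FAIL.

Inductive reach : term -> term -> Prop :=
| reach_refl : forall P, reach P P
| reach_step : forall P a Q R, step P a Q -> reach Q R -> reach P R.

End Calculus.

Arguments STOP {Sigma}.
Arguments FAIL {Sigma}.
Arguments Tau {Sigma}.

(* A doomed term can only move by tau, stays doomed, and strictly decreases in
   syntactic size, so every run from it is finite.  Conversely a doomed term
   other than FAIL always has a tau step: FAIL components are discarded by
   rules 11-13 and otherwise a doomed component moves, by rule 6/7 or 9/10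
   according to whether its partner is viable.  Hence maximal runs end in FAIL. *)
From Stdlib Require Import Lia Classical.
Set Implicit Arguments.

Section Doomed.
Variable Sigma : Type.
Implicit Types (P Q D : term Sigma) (a : action Sigma).

Fixpoint term_size P : nat :=
  match P with
  | STOP | FAIL => 1
  | Prefix _ _ Q => S (term_size Q)
  | Choice P1 P2 | Par P1 _ P2 => S (term_size P1 + term_size P2)
  end.

Lemma doomed_step P a Q :
  step P a Q -> doomed P -> a = Tau /\ doomed Q /\ term_size Q < term_size P.
Proof.
  induction 1; intro Hd; inversion Hd; subst; simpl in *;
    try match goal with Hv : viable ?X, Hx : doomed ?X |- _ => contradiction end;
    try match goal with IH : doomed ?X -> _, Hx : doomed ?X |- _ =>
          destruct (IH Hx) as (? & ? & ?) end;
    try discriminate;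
    repeat split; try lia; auto using doomed.
Qed.

Lemma doomed_reach P Q : reach P Q -> doomed P -> doomed Q.
Proof.
  induction 1 as [|P a Q R Hstep _ IH]; intro Hd; auto.
  apply IH, (doomed_step Hstep Hd).
Qed.

Lemma doomed_no_infinite_run (p : nat -> term Sigma) (a : nat -> action Sigma) :
  doomed (p 0) -> ~ (forall n, step (p n) (a n) (p (S n))).
Proof.
  intros H0 Hrun.
  assert (Hdescent : forall k, doomed (p k) /\ term_size (p k) + k <= term_size (p 0)).
  { induction k as [|k [Hk Hsize]]; [split; auto; lia|].
    destruct (doomed_step (Hrun k) Hk) as (_ & ? & ?). split; auto; lia. }
  destruct (Hdescent (S (term_size (p 0)))). lia.
Qed.

Lemma doomed_progress D : doomed D -> D = FAIL \/ exists Q, step D Tau Q.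
Proof.
  assert (Htau : forall E, ~ act_in (@Tau Sigma) E) by (intros E H; exact H).
  induction 1 as [|D1 D2 _ [-> | [Q1 H1]] _ [-> | [Q2 H2]]
                 |D E P HD [-> | [Q H]] |P E D HD [-> | [Q H]]];
    auto; right; eauto using step.
  all: destruct (classic (doomed P)); eauto using step.
Qed.

End Doomed.

Theorem proposition1 (Sigma : Type) (D : term Sigma) :
  closed D -> doomed D ->
  (forall (a : action Sigma) (P : term Sigma), step D a P -> a = Tau) /\
  ~ (exists (p : nat -> term Sigma) (a : nat -> action Sigma),
        p 0 = D /\ forall n, step (p n) (a n) (p (S n))) /\
  (forall P : term Sigma, reach D P ->
     (forall (a : action Sigma) (Q : term Sigma), ~ step P a Q) -> P = FAIL).
Proof.
  intros _ HD. split; [|split].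
  - intros a P Hstep. apply (doomed_step Hstep HD).
  - intros (p & a & H0 & Hrun). subst D. exact (doomed_no_infinite_run p a HD Hrun).
  - intros P Hreach Hstuck.
    destruct (doomed_progress (doomed_reach Hreach HD)) as [-> | [Q Hstep]]; auto.
    contradiction (Hstuck _ _ Hstep).
Qed.
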